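(* The inquisitive disjunction $\vee$ is strongly undefinable in extended propositional dependence logic $\mathcal D^+$. Concretely: for every context $\varphi(a,b)$ of $\mathcal D^+$ and every pair of distinct propositional letters $p,q$ not occurring in $\varphi(a,b)$, letting $M_{pq}$ be the model with worlds $w_1,w_2,w_3$ in which $p$ is true exactly at $w_1,w_2$, $q$ is true exactly at $w_2,w_3$, and all other letters are false everywhere, we have $\varphi(=\!(p),=\!(q))\not\equiv_{M_{pq}}=\!(p)\vee=\!(q)$; in particular $\varphi(=\!(p),=\!(q))\not\equiv=\!(p)\vee=\!(q)$.
   Context: Formulas of $\mathcal D^+$: $\varphi::= p\mid\neg p\mid\bot\mid=\!(\alpha_1,\dots,\alpha_n;\beta)\mid\varphi\land\varphi\mid\varphi\otimes\varphi$, where $p$ is a propositional letter and $\alpha_1,\dots,\alpha_n,\beta$ are classical formulas (formulas built from $p,\neg p,\bot,\land,\otimes$ without dependence atoms); $=\!(\beta)$ denotes the case $n=0$. A context $\varphi(a,b)$ is a $\mathcal D^+$ formula in which the letters $a,b$ do not occur negated nor inside a dependence atom; $\varphi(\psi,\chi)$ replaces $a$ by $\psi$ and $b$ by $\chi$. A model is $M=(W,V)$, $V(w)$ the set of letters true at $w$. Support at $s\subseteq W$: $s\models p$ iff $p$ true at all $w\in s$; $s\models\neg p$ iff $p$ false at all $w\in s$; $s\models\bot$ iff $s=\emptyset$; $s\models\psi\land\chi$ iff both; $s\models\psi\otimes\chi$ iff $s=t_1\cup t_2$ with $t_1\models\psi$, $t_2\models\chi$; $s\models=\!(\alpha_1,\dots,\alpha_n;\beta)$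 iff for all $w,w'\in s$, if ($\{w\}\models\alpha_1\land\dots\land\alpha_n$ iff $\{w'\}\models\alpha_1\land\dots\land\alpha_n$) then ($\{w\}\models\beta$ iff $\{w'\}\models\beta$); $s\models\psi\vee\chi$ iff $s\models\psi$ or $s\models\chi$ (inquisitive disjunction, not in $\mathcal D^+$). $\psi\equiv_M\chi$: same supporting states in $M$; $\psi\equiv\chi$: $\psi\equiv_M\chi$ for all $M$. Strong undefinability of a binary connective $\circ$ means: there are formulas $\psi,\chi$ and a model $M$ such that for every template (here: context) $\varphi(a,b)$, $\varphi(\psi',\chi')\not\equiv_{M'}\psi'\circ\chi'$, where $\psi',\chi'$ differ from $\psi,\chi$ only by renaming of atoms and $M'$ is isomorphic to $M$. *)

From Stdlib Require Import List Arith.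
Import ListNotations.

Inductive form : Type :=
| Atom  : nat -> form
| NAtom : nat -> form
| Bot   : form
| Dep   : list form -> form -> form
| Conj  : form -> form -> form
| Tens  : form -> form -> form.

Fixpoint classical (f : form) : Prop :=
  match f with
  | Atom _ | NAtom _ | Bot => True
  | Dep _ _ => False
  | Conj f g | Tens f g => classical f /\ classical g
  end.

Fixpoint wf (f : form) : Prop :=
  match f with
  | Atom _ | NAtom _ | Bot => True
  | Dep l b => Forall classical l /\ classical b
  | Conj f g | Tens f g => wf f /\ wf g
  end.

Fixpoint occurs (n : nat) (f : form) : Prop :=
  match f with
  | Atom m | NAtom m => m = n
  | Bot => False
  | Dep l b =>
      (let fix occl (l : list form) : Prop :=
         match l with [] => False | x :: l' => occurs n x \/ occl l' end
       in occl l) \/ occurs n b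
  | Conj f g | Tens f g => occurs n f \/ occurs n g
  end.

Fixpoint bad_occ (n : nat) (f : form) : Prop :=
  match f with
  | Atom _ | Bot => False
  | NAtom m => m = n
  | Dep l b => occurs n (Dep l b)
  | Conj f g | Tens f g => bad_occ n f \/ bad_occ n g
  end.

Definition context (a b : nat) (phi : form) : Prop :=
  wf phi /\ ~ bad_occ a phi /\ ~ bad_occ b phi.

Fixpoint subst (a : nat) (psi : form) (b : nat) (chi : form) (f : form) : form :=
  match f with
  | Atom n => if Nat.eqb n a then psi else if Nat.eqb n b then chi else Atom n
  | NAtom n => NAtom n
  | Bot => Bot
  | Dep l be => Dep l be
  | Conj f g => Conj (subst a psi b chi f) (subst a psi b chi g)
  | Tens f g => Tens (subst a psi b chi f) (subst a psi b chi g)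
  end.

Fixpoint sup {W : Type} (V : W -> nat -> bool) (s : W -> Prop) (f : form) : Prop :=
  match f with
  | Atom p => forall w, s w -> V w p = true
  | NAtom p => forall w, s w -> V w p = false
  | Bot => forall w, ~ s w
  | Dep l be =>
      let fix supall (l : list form) (u : W -> Prop) : Prop :=
        match l with [] => True | x :: l' => sup V u x /\ supall l' u end in
      forall w w', s w -> s w' ->
        ((supall l (fun x => x = w) <-> supall l (fun x => x = w')) ->
         (sup V (fun x => x = w) be <-> sup V (fun x => x = w') be))
  | Conj f g => sup V s f /\ sup V s g
  | Tens f g => exists t1 t2 : W -> Prop,
      (forall w, s w <-> t1 w \/ t2 w) /\ sup V t1 f /\ sup V t2 g
  end.

Definition dep0 (p : nat) : form := Dep [] (Atom p).

Definition sup_idisj {W : Type} (V : W -> nat -> bool) (s : W -> Prop) (psi chi : form) : Prop :=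
  sup V s psi \/ sup V s chi.

Definition equiv_idisj_in {W : Type} (V : W -> nat -> bool) (f psi chi : form) : Prop :=
  forall s : W -> Prop, sup V s f <-> sup_idisj V s psi chi.

Inductive world3 : Type := w1 | w2 | w3.

Definition V_pq (p q : nat) (w : world3) (n : nat) : bool :=
  orb (andb (Nat.eqb n p) (match w with w1 | w2 => true | w3 => false end))
      (andb (Nat.eqb n q) (match w with w2 | w3 => true | w1 => false end)).

(* In M_pq every letter other than p and q is false everywhere, so every
   classical subformula of phi is supported either by all states or by the
   empty state only, and every dependence atom of phi is trivially supported.
   Hence, by induction on phi, the states supporting phi(=(p),=(q)) form a
   family that contains the empty state, is downward closed, contains either
   all singletons or none, and contains {w1,w3} as soon as it contains both
   {w1,w2} and {w2,w3}; conjunction and tensor preserve these properties.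
   The family of =(p) \/ =(q) violates the last one: p is constant on
   {w1,w2}, q is constant on {w2,w3}, and neither is constant on {w1,w3}. *)
From Stdlib Require Import Arith Classical.

Definition empty_state {W : Type} (s : W -> Prop) : Prop := forall w, ~ s w.

Definition tensor {W : Type} (F G : (W -> Prop) -> Prop) (s : W -> Prop) : Prop :=
  exists t1 t2 : W -> Prop, (forall w, s w <-> t1 w \/ t2 w) /\ F t1 /\ G t2.

Lemma sup_dep0 {W : Type} (V : W -> nat -> bool) (r : nat) (s : W -> Prop) :
  sup V s (dep0 r) <-> (forall w w', s w -> s w' -> (V w r = true <-> V w' r = true)).
Proof.
  cbn. split; intros H w w' Hw Hw'.
  - specialize (H w w' Hw Hw' (conj (fun t => t) (fun t => t))).
    split; intro K.
    + refine (proj1 H _ w' eq_refl). intros x ->. exact K.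
    + refine (proj2 H _ w eq_refl). intros x ->. exact K.
  - intros _. split; intros K x ->.
    + apply (H w w' Hw Hw'), K. reflexivity.
    + apply (H w w' Hw Hw'), K. reflexivity.
Qed.

(* [c] is the truth value of [f], the same at every world. *)
Lemma sup_classical_flat {W : Type} (V : W -> nat -> bool) (f : form) :
  classical f -> (forall n w, occurs n f -> V w n = false) ->
  exists c : Prop, forall s, sup V s f <-> c \/ empty_state s.
Proof.
  unfold empty_state.
  induction f as [n | n | | l be | f IHf g IHg | f IHf g IHg]; cbn;
    intros Hcl Hfalse.
  - exists False. split.
    + intros H; right; intros w Hw.
      specialize (H w Hw). rewrite (Hfalse n w eq_refl) in H. discriminate.
    + intros [[] | H] w Hw. contradiction (H w).
  - exists True. split; [tauto |]. intros _ w _. exact (Hfalse n w eq_refl).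
  - exists False. tauto.
  - contradiction.
  - destruct Hcl as [Hf Hg].
    destruct (IHf Hf (fun n w h => Hfalse n w (or_introl h))) as [cf Ef].
    destruct (IHg Hg (fun n w h => Hfalse n w (or_intror h))) as [cg Eg].
    exists (cf /\ cg). intros s. rewrite Ef, Eg. tauto.
  - destruct Hcl as [Hf Hg].
    destruct (IHf Hf (fun n w h => Hfalse n w (or_introl h))) as [cf Ef].
    destruct (IHg Hg (fun n w h => Hfalse n w (or_intror h))) as [cg Eg].
    exists (cf \/ cg). intros s. split.
    + intros (t1 & t2 & Hs & H1 & H2). rewrite Ef in H1. rewrite Eg in H2.
      destruct H1 as [H1 | H1]; [tauto |]. destruct H2 as [H2 | H2]; [tauto |].
      right. intros w Hw. apply Hs in Hw. destruct Hw as [Hw | Hw].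
      * exact (H1 w Hw).
      * exact (H2 w Hw).
    + intros [[Hc | Hc] | Hs].
      * exists s, (fun _ => False). rewrite Ef, Eg. firstorder.
      * exists (fun _ => False), s. rewrite Ef, Eg. firstorder.
      * exists s, s. rewrite Ef, Eg. firstorder.
Qed.

(* Only the conclusion matters: it has the same truth value at every world. *)
Lemma sup_Dep_flat {W : Type} (V : W -> nat -> bool) (l : list form) (be : form) (c : Prop) :
  (forall s, sup V s be <-> c \/ empty_state s) -> forall s, sup V s (Dep l be).
Proof.
  intros E s. cbn. intros w w' _ _ _.
  rewrite !E. unfold empty_state.
  split; intros [Hc | H]; try (left; exact Hc).
  - contradiction (H w eq_refl).
  - contradiction (H w' eq_refl).
Qed.

Definition singleton (w : world3) : world3 -> Prop := fun x => x = w.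

Definition doubleton (u v : world3) : world3 -> Prop := fun x => x = u \/ x = v.

Record admissible (F : (world3 -> Prop) -> Prop) : Prop := {
  admissible_empty : F (fun _ => False);
  admissible_downward : forall s s', (forall w, s' w -> s w) -> F s -> F s';
  admissible_singleton : forall w w', F (singleton w) -> F (singleton w');
  admissible_gap : F (doubleton w1 w2) -> F (doubleton w2 w3) -> F (doubleton w1 w3)
}.

Lemma admissible_flat (F : (world3 -> Prop) -> Prop) (c : Prop) :
  (forall s, F s <-> c \/ empty_state s) -> admissible F.
Proof.
  unfold empty_state. intros E. split; intros *; rewrite ?E.
  - right; tauto.
  - intros Hs [Hc | H]; [left; exact Hc | right; firstorder].
  - intros [Hc | H]; [left; exact Hc |]. contradiction (H w eq_refl).
  - intros [Hc | H]; [left; exact Hc |]. contradiction (H w1 (or_introl eq_refl)).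
Qed.

Lemma admissible_conj (F G : (world3 -> Prop) -> Prop) :
  admissible F -> admissible G -> admissible (fun s => F s /\ G s).
Proof.
  intros [F0 Fdown Fsing Fgap] [G0 Gdown Gsing Ggap]. split.
  - tauto.
  - intros s s' Hss' [HF HG]. split; [exact (Fdown s s' Hss' HF) | exact (Gdown s s' Hss' HG)].
  - intros w w' [HF HG]. split; [exact (Fsing w w' HF) | exact (Gsing w w' HG)].
  - tauto.
Qed.

Lemma admissible_nonempty_singleton (F : (world3 -> Prop) -> Prop) (s : world3 -> Prop) (w : world3) :
  admissible F -> F s -> s w -> F (singleton w1).
Proof.
  intros HF Hs Hw. apply (admissible_singleton F HF w).
  apply (admissible_downward F HF s); [| exact Hs]. intros x ->. exact Hw.
Qed.

(* Without singletons, G supports only the empty state. *)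
Lemma tensor_absorb (F G : (world3 -> Prop) -> Prop) (s : world3 -> Prop) :
  admissible F -> admissible G -> ~ G (singleton w1) -> tensor F G s -> F s.
Proof.
  intros HF HG HG1 (t1 & t2 & Hs & H1 & H2).
  apply (admissible_downward F HF t1); [| exact H1].
  intros w Hw. apply Hs in Hw. destruct Hw as [Hw | Hw]; [exact Hw |].
  contradiction (HG1 (admissible_nonempty_singleton G t2 w HG H2 Hw)).
Qed.

Lemma tensor_comm {W : Type} (F G : (W -> Prop) -> Prop) (s : W -> Prop) :
  tensor F G s -> tensor G F s.
Proof. intros (t1 & t2 & Hs & H1 & H2). exists t2, t1. firstorder. Qed.

Lemma tensor_gap_absorb (F G : (world3 -> Prop) -> Prop) :
  admissible F -> admissible G -> ~ G (singleton w1) ->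
  tensor F G (doubleton w1 w2) -> tensor F G (doubleton w2 w3) ->
  tensor F G (doubleton w1 w3).
Proof.
  intros HF HG HG1 H12 H23.
  exists (doubleton w1 w3), (fun _ => False). split; [tauto | split].
  - apply (admissible_gap F HF); apply (tensor_absorb F G _ HF HG HG1); assumption.
  - apply admissible_empty; exact HG.
Qed.

Lemma admissible_tensor (F G : (world3 -> Prop) -> Prop) :
  admissible F -> admissible G -> admissible (tensor F G).
Proof.
  intros HF HG. split.
  - exists (fun _ => False), (fun _ => False).
    split; [tauto | split; apply admissible_empty; assumption].
  - intros s s' Hss' (t1 & t2 & Hs & H1 & H2).
    exists (fun w => s' w /\ t1 w), (fun w => s' w /\ t2 w). split; [| split].
    + intros w. specialize (Hs w). specialize (Hss' w). tauto.
    + apply (admissible_downward F HF t1); [intros w [_ Hw]; exact Hw | exact H1].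
    + apply (admissible_downward G HG t2); [intros w [_ Hw]; exact Hw | exact H2].
  - intros w w' (t1 & t2 & Hs & H1 & H2).
    destruct (proj1 (Hs w) eq_refl) as [Hw | Hw].
    + exists (singleton w'), (fun _ => False). split; [firstorder |]. split.
      * exact (admissible_singleton F HF w1 w' (admissible_nonempty_singleton F t1 w HF H1 Hw)).
      * apply admissible_empty; exact HG.
    + exists (fun _ => False), (singleton w'). split; [firstorder |]. split.
      * apply admissible_empty; exact HF.
      * exact (admissible_singleton G HG w1 w' (admissible_nonempty_singleton G t2 w HG H2 Hw)).
  - intros H12 H23.
    destruct (classic (F (singleton w1))) as [HF1 | HF1];
      destruct (classic (G (singleton w1))) as [HG1 | HG1].
    + exists (singleton w1), (singleton w3). split; [firstorder | split].
      * exact HF1.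
      * exact (admissible_singleton G HG w1 w3 HG1).
    + exact (tensor_gap_absorb F G HF HG HG1 H12 H23).
    + apply tensor_comm, (tensor_gap_absorb G F HG HF HF1); apply tensor_comm; assumption.
    + contradiction HF1.
      apply (admissible_nonempty_singleton F (doubleton w1 w2) w1 HF); [| left; reflexivity].
      exact (tensor_absorb F G _ HF HG HG1 H12).
Qed.

Lemma admissible_dep0 (V : world3 -> nat -> bool) (r : nat) :
  admissible (fun s => sup V s (dep0 r)).
Proof.
  split; intros *; rewrite ?sup_dep0.
  - intros w w' [].
  - intros Hss' H w w' Hw Hw'. exact (H w w' (Hss' w Hw) (Hss' w' Hw')).
  - intros _ x y -> ->. reflexivity.
  - intros H12 H23.
    assert (Hmid : forall x, doubleton w1 w3 x -> (V x r = true <-> V w2 r = true)).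
    { intros x [-> | ->]; [apply H12 | apply H23]; unfold doubleton; auto. }
    intros x y Hx Hy. rewrite (Hmid x Hx), (Hmid y Hy). reflexivity.
Qed.

Section Mpq.

Variables p q : nat.
Hypothesis p_neq_q : p <> q.

Lemma V_pq_p (w : world3) : V_pq p q w p = match w with w3 => false | _ => true end.
Proof.
  unfold V_pq. rewrite Nat.eqb_refl, (proj2 (Nat.eqb_neq p q) p_neq_q).
  destruct w; reflexivity.
Qed.

Lemma V_pq_q (w : world3) : V_pq p q w q = match w with w1 => false | _ => true end.
Proof.
  unfold V_pq. rewrite Nat.eqb_refl, (proj2 (Nat.eqb_neq q p) (not_eq_sym p_neq_q)).
  destruct w; reflexivity.
Qed.

Lemma V_pq_fresh (f : form) :
  ~ occurs p f -> ~ occurs q f -> forall n w, occurs n f -> V_pq p q w n = false.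
Proof.
  intros Hp Hq n w Hn. unfold V_pq.
  rewrite (proj2 (Nat.eqb_neq n p)), (proj2 (Nat.eqb_neq n q)); [reflexivity | |];
    intros ->; contradiction.
Qed.

Lemma admissible_classical_fresh (f : form) :
  classical f -> ~ occurs p f -> ~ occurs q f -> admissible (fun s => sup (V_pq p q) s f).
Proof.
  intros Hcl Hp Hq.
  destruct (sup_classical_flat (V_pq p q) f Hcl (V_pq_fresh f Hp Hq)) as [c E].
  exact (admissible_flat _ c E).
Qed.

Lemma admissible_subst (a b : nat) (phi : form) :
  wf phi -> ~ occurs p phi -> ~ occurs q phi ->
  admissible (fun s => sup (V_pq p q) s (subst a (dep0 p) b (dep0 q) phi)).
Proof.
  induction phi as [n | n | | l be | f IHf g IHg | f IHf g IHg]; intros Hwf Hp Hq.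
  - cbn. destruct (n =? a); [apply admissible_dep0 |].
    destruct (n =? b); [apply admissible_dep0 |].
    exact (admissible_classical_fresh (Atom n) I Hp Hq).
  - exact (admissible_classical_fresh (NAtom n) I Hp Hq).
  - exact (admissible_classical_fresh Bot I Hp Hq).
  - destruct Hwf as [_ Hbe].
    destruct (sup_classical_flat (V_pq p q) be Hbe
                (V_pq_fresh be (fun h => Hp (or_intror h)) (fun h => Hq (or_intror h))))
      as [c E].
    apply (admissible_flat _ True). intros s. split; [left; exact I |].
    intros _. exact (sup_Dep_flat _ l be c E s).
  - destruct Hwf as [Hf Hg].
    exact (admissible_conj _ _ (IHf Hf (fun h => Hp (or_introl h)) (fun h => Hq (or_introl h)))
                               (IHg Hg (fun h => Hp (or_intror h)) (fun h => Hq (or_intror h)))).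
  - destruct Hwf as [Hf Hg].
    exact (admissible_tensor _ _ (IHf Hf (fun h => Hp (or_introl h)) (fun h => Hq (or_introl h)))
                                 (IHg Hg (fun h => Hp (or_intror h)) (fun h => Hq (or_intror h)))).
Qed.

Lemma idisj_dep0_not_admissible (F : (world3 -> Prop) -> Prop) :
  admissible F -> ~ (forall s, F s <-> sup_idisj (V_pq p q) s (dep0 p) (dep0 q)).
Proof.
  intros HF E. pose proof (admissible_gap F HF) as Hgap.
  rewrite !E in Hgap. unfold sup_idisj in Hgap. rewrite !sup_dep0 in Hgap.
  destruct Hgap as [H13 | H13].
  - left. intros x y [-> | ->] [-> | ->]; rewrite !V_pq_p; reflexivity.
  - right. intros x y [-> | ->] [-> | ->]; rewrite !V_pq_q; reflexivity.
  - specialize (H13 w1 w3 (or_introl eq_refl) (or_intror eq_refl)).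
    rewrite !V_pq_p in H13. discriminate (proj1 H13 eq_refl).
  - specialize (H13 w1 w3 (or_introl eq_refl) (or_intror eq_refl)).
    rewrite !V_pq_q in H13. discriminate (proj2 H13 eq_refl).
Qed.

End Mpq.

Theorem theorem7 :
  forall (a b : nat) (phi : form) (p q : nat),
    a <> b -> context a b phi ->
    p <> q -> ~ occurs p phi -> ~ occurs q phi ->
    ~ equiv_idisj_in (V_pq p q) (subst a (dep0 p) b (dep0 q) phi) (dep0 p) (dep0 q)
    /\ ~ (forall (W : Type) (V : W -> nat -> bool),
            equiv_idisj_in V (subst a (dep0 p) b (dep0 q) phi) (dep0 p) (dep0 q)).
Proof.
  (* [subst] never rewrites under negations or dependence atoms. *)
  intros a b phi p q _ [Hwf _] Hpq Hp Hq.
  assert (Hpq_model : ~ equiv_idisj_in (V_pq p q) (subst a (dep0 p) b (dep0 q) phi)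
                                       (dep0 p) (dep0 q)).
  { exact (idisj_dep0_not_admissible p q Hpq _ (admissible_subst p q a b phi Hwf Hp Hq)). }
  split; [exact Hpq_model |].
  intros Hall. exact (Hpq_model (Hall world3 (V_pq p q))).
Qed.
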